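(* Let $n\ge2$, $j\ge0$, $b\in B$, $(\mu_i)_{i=1}^n\in\mathbb Z^n$ and $\mu=-\mu_1\Lambda_0+(\mu_1-\mu_2)\Lambda_1+\cdots+(\mu_{n-1}-\mu_n)\Lambda_{n-1}+2\mu_n\Lambda_n$. Then $$g_j(b,\mu)=\sum_\gamma q^{\frac12\sum_{i\in B,i\ne0}\gamma_i(\gamma_i-1)+\sum_{i\in B}H(b\otimes i)\gamma_i}\begin{bmatrix}j\\ \gamma\end{bmatrix}_q,$$ the sum over $\gamma=(\gamma_i)_{i\in B}\in\mathbb Z_{\ge0}^{2n+1}$ with $\gamma_i-\gamma_{\bar i}=\mu_i$ for $i=1,\dots,n$ and $\sum_{i\in B}\gamma_i=j$.
   Context: Affine algebra $A^{(2)}_{2n}$ with Dynkin nodes labeled so that the unique level-1 dominant weight is $\Lambda_n$; fundamental weights $\Lambda_0,\dots,\Lambda_n$, $P_{cl}=\bigoplus\mathbb Z\Lambda_i$. $B=\{1,\dots,n,0,\bar n,\dots,\bar1\}$ totally ordered by $1\prec\cdots\prec n\prec0\prec\bar n\prec\cdots\prec\bar1$. Weights: $wt(\bar b)=-wt(b)$, $wt(b)=\Lambda_b-\Lambda_{b-1}$ for $1\le b\le n-1$ (so $wt(1)=\Lambda_1-\Lambda_0$), $wt(n)=2\Lambda_n-\Lambda_{n-1}$, $wt(0)=0$. Energy function: $H(b\otimes b')=0$ if $b\prec b'$, $=1$ if $b\succeq b'$, except $H(0\otimes0)=0$. For $j\ge0$, $b\in B$, $\mu\in P_{cl}$: $g_j(b,\mu)=\sum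 q^{\sum_{i=1}^j iH(b_{i+1}\otimes b_i)}$, summed over $(b_j,\dots,b_1)\in B^j$ with $wt(b_j)+\cdots+wt(b_1)=\mu$, where $b_{j+1}=b$. For an integer vector $\gamma=(\gamma_b)_{b\in B}$: $\begin{bmatrix}j\\ \gamma\end{bmatrix}_q=(q)_j/\prod_{b\in B}(q)_{\gamma_b}$ if $\sum_b\gamma_b=j$ and all $\gamma_b\ge0$, and $0$ otherwise; $(q)_m=\prod_{i=1}^m(1-q^i)$. *)

From HB Require Import structures.
From mathcomp Require Import all_boot all_order all_algebra.
Set Implicit Arguments. Unset Strict Implicit. Unset Printing Implicit Defensive.
Import Order.TTheory GRing.Theory Num.Theory.
Local Open Scope ring_scope.

(* Crystal B for A^{(2)}_{2n}, encoded as 'I_(2n+1) listed in the total order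
   1 < 2 < ... < n < 0 < nbar < ... < 1bar :
   position p < n      <-> letter p+1
   position p = n      <-> letter 0
   position p > n      <-> letter bar(2n+1-p). *)
Definition Bn (n : nat) := 'I_(n.*2.+1).

Definition pos_unbar (n k : nat) : nat := k.-1.
Definition pos_zero (n : nat) : nat := n.
Definition pos_bar (n k : nat) : nat := n.*2.+1 - k.

(* elements of P_cl = (+)_{i=0..n} Z Lambda_i are represented by their
   coefficient functions nat -> int (only indices 0..n are relevant). *)
Definition Lam (i : nat) : nat -> int := fun k => (k == i)%:Z.

Definition wt_unbar (n k : nat) : nat -> int :=
  fun i => if k == n then 2%:Z * Lam n i - Lam n.-1 i
           else Lam k i - Lam k.-1 i.

Definition wt (n : nat) (b : Bn n) : nat -> int :=
  fun i =>
    if (b < n)%N then wt_unbar n b.+1 i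
    else if (b == n :> nat) then 0
    else - wt_unbar n (n.*2.+1 - b) i.

Definition H (n : nat) (b b' : Bn n) : nat :=
  if (b < b')%N then 0%N
  else if (b == n :> nat) && (b' == n :> nat) then 0%N
  else 1%N.

Definition QF := {fraction {poly int}}.
Definition q : QF := @FracField.tofrac _ 'X.

Definition qpoch (m : nat) : QF := \prod_(1 <= i < m.+1) (1 - q ^+ i).

(* g_j(b, mu): sum over (b_j,...,b_1) in B^j, here t : 'I_j -> B with
   t i = b_{i+1}; b_{j+1} = b. *)
Definition bseq (n j : nat) (b : Bn n) (t : {ffun 'I_j -> Bn n}) (k : nat) : Bn n :=
  if (k < j)%N then (if insub k is Some i then t i else b) else b.
  (* bseq n j b t k = b_{k+1} for 0 <= k <= j *)

Definition energy (n j : nat) (b : Bn n) (t : {ffun 'I_j -> Bn n}) : nat :=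
  \sum_(1 <= i < j.+1) i * H (bseq b t i) (bseq b t i.-1).

Definition g (n j : nat) (b : Bn n) (mu : nat -> int) : QF :=
  \sum_(t : {ffun 'I_j -> Bn n} |
        [forall i : 'I_n.+1, (\sum_(k < j) wt (t k) i) == mu i])
     q ^+ energy b t.

Definition qmultinom (n j : nat) (gamma : Bn n -> nat) : QF :=
  if (\sum_(c : Bn n) gamma c == j)%N
  then qpoch j / \prod_(c : Bn n) qpoch (gamma c)
  else 0.

Definition mu_of (n : nat) (m : nat -> int) : nat -> int :=
  fun i => if i == 0%N then - m 1%N
           else if (i < n)%N then m i - m i.+1
           else if i == n then 2%:Z * m n
           else 0.

From Pilot Require Import Defs.
From HB Require Import structures.
From mathcomp Require Import all_boot all_order all_algebra.
From mathcomp Require Import zify ring.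
Set Implicit Arguments. Unset Strict Implicit. Unset Printing Implicit Defensive.
Import Order.TTheory GRing.Theory Num.Theory.
Local Open Scope ring_scope.

(* Read a sequence (b_j, ..., b_1) as the word b_j ... b_1.  Its energy obeys
   the first-letter recursion E_b(c w) = (|w| + 1) H(b (x) c) + E_c(w), so the
   generating function F_b(gamma) of the words of content gamma satisfies
   F_b(gamma) = sum_c q^(|gamma| H(b (x) c)) F_c(gamma - e_c).  The closed form
   satisfies the same recursion: H(b (x) .) is the indicator of an initial
   segment of B, so sum_c q^(|gamma| H(b (x) c) + gamma_(<c)) (1 - q^gamma_c)
   telescopes to q^(sum_c H(b (x) c) gamma_c) (1 - q^|gamma|).  The weight of a
   word only depends on the differences gamma_i - gamma_ibar, and its
   Lambda-coordinates form a triangular system in them, so the weight is mu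
   exactly when gamma_i - gamma_ibar = mu_i for all i. *)

Section WordGeneratingFunction.
Variables (R : comPzRingType) (x : R) (n : nat).
Local Notation T := (Bn n).
Local Notation N := n.*2.+1.

Definition qpoch_at m : R := \prod_(1 <= i < m.+1) (1 - x ^+ i).

Lemma qpoch_atS m : qpoch_at m.+1 = qpoch_at m * (1 - x ^+ m.+1).
Proof. by rewrite /qpoch_at big_nat_recr. Qed.

Definition H_bound (b : T) : nat := if b == n :> nat then n else b.+1.

Lemma H_boundE (b c : T) : H b c = (c < H_bound b)%N.
Proof.
rewrite /H /H_bound; case: (ltnP b c) => h1 /=; case: (b =P n :> nat) => h2;
  case: (c =P n :> nat) => h3 /=; try lia; case: ifP; lia.
Qed.

Lemma H_bound_le (b : T) : (H_bound b <= N)%N.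
Proof. by rewrite /H_bound; case: eqP => _; have := ltn_ord b; lia. Qed.

Definition prefix_sum (gam : T -> nat) t := (\sum_(0 <= k < t) gam (inord k))%N.

Lemma sum_ord_nat (V : nmodType) (F : T -> V) :
  \sum_(c : T) F c = \sum_(0 <= i < N) F (inord i).
Proof. by rewrite big_mkord; apply: eq_bigr => i _; rewrite inord_val. Qed.

Lemma sum_ltE (gam : T -> nat) t : (t <= N)%N ->
  (\sum_(d : T | (d < t)%N) gam d)%N = prefix_sum gam t.
Proof.
move=> tN; rewrite /prefix_sum (big_nat_widen _ _ _ _ _ tN) big_mkord.
by apply: eq_bigr => i _; rewrite inord_val.
Qed.

Lemma telescope_split (u : nat -> R) m t : (t <= N)%N ->
  \sum_(0 <= i < N) x ^+ (m * (i < t)) * (u i - u i.+1) =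
  x ^+ m * (u 0%N - u t) + (u t - u N).
Proof.
move=> tN; rewrite (big_cat_nat (leq0n t) tN) /=.
have tel a c : (a <= c)%N -> \sum_(a <= i < c) (u i - u i.+1) = u a - u c.
  move=> ac; rewrite -opprB -telescope_sumr // -sumrN.
  by apply: eq_bigr => i _; rewrite opprB.
rewrite -tel // -(tel t) // mulr_sumr; congr (_ + _); apply: eq_big_nat => i /andP[lo hi].
  by rewrite hi muln1.
by rewrite ltnNge lo muln0 mul1r.
Qed.

Lemma energy_telescope (gam : T -> nat) (b : T) m : (\sum_(d : T) gam d)%N = m ->
  \sum_(c : T) x ^+ (m * H b c + prefix_sum gam c) * (1 - x ^+ gam c) =
  x ^+ (\sum_(c : T) H b c * gam c) * (1 - x ^+ m).
Proof.
move=> hm; have tN := H_bound_le b.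
have -> : (\sum_(c : T) H b c * gam c)%N = prefix_sum gam (H_bound b).
  rewrite -(sum_ltE gam tN) [RHS]big_mkcond /=; apply: eq_bigr => c _.
  by rewrite H_boundE; case: (c < _)%N; rewrite ?mul1n ?mul0n.
rewrite sum_ord_nat (eq_big_nat _ _ (F2 := fun i => x ^+ (m * (i < H_bound b))
    * (x ^+ prefix_sum gam i - x ^+ prefix_sum gam i.+1))).
  rewrite telescope_split // /prefix_sum big_geq // expr0 -sum_ord_nat hm.
  by rewrite mulrBr mulr1; ring.
move=> i /andP[_ iN]; rewrite H_boundE inordK // exprD -mulrA; congr (_ * _).
by rewrite /prefix_sum big_nat_recr //= exprD mulrBr mulr1.
Qed.

Fixpoint word_energy (b : T) (s : seq T) : nat :=
  if s is c :: s' then ((size s').+1 * H b c + word_energy c s')%N else 0%N.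

Fixpoint words k : seq (seq T) :=
  if k is k'.+1 then [seq c :: s | c <- index_enum T, s <- words k'] else [:: [::]].

Lemma mem_words k s : (s \in words k) = (size s == k).
Proof.
elim: k s => [|k IH] s /=; first by case: s.
apply/allpairsPdep/idP.
  by case=> c [s' [_ hs' ->]] /=; rewrite eqSS -IH.
case: s => // c s' /= h; exists c, s'; split => //; first by rewrite mem_index_enum.
by rewrite IH.
Qed.

Lemma uniq_words k : uniq (words k).
Proof.
elim: k => [|k IH] //=; apply: allpairs_uniq => //; first exact: index_enum_uniq.
by move=> [c s] [c' s'] _ _ /= [-> ->].
Qed.

Definition has_content (gam : T -> nat) (s : seq T) := [forall d, count_mem d s == gam d].

Definition decr_at (gam : T -> nat) (c : T) (d : T) := if d == c then (gam d).-1 else gam d.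

Lemma has_content_cons (gam : T -> nat) c s :
  has_content gam (c :: s) = (0 < gam c)%N && has_content (decr_at gam c) s.
Proof.
apply/forallP/andP.
  move=> h; move/eqP: (h c); rewrite /= eqxx => <-; split => //.
  apply/forallP => d; rewrite /decr_at; move/eqP: (h d) => /= <-.
  by case: (d =P c) => [->|/nesym/eqP ne]; rewrite ?eqxx // (negPf ne).
case=> h0 /forallP h d; move/eqP: (h d); rewrite /decr_at /= => hd.
case: (d =P c) hd => [->|/nesym/eqP ne] hd; first by rewrite eqxx hd add1n prednK.
by rewrite hd (negPf ne).
Qed.

Definition word_sum k (b : T) (gam : T -> nat) : R :=
  \sum_(s <- words k | has_content gam s) x ^+ word_energy b s.

Lemma word_sumS k (b : T) (gam : T -> nat) :
  word_sum k.+1 b gam =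
  \sum_(c : T) (x ^+ (k.+1 * H b c) * word_sum k c (decr_at gam c)) *+ (0 < gam c)%N.
Proof.
rewrite /word_sum big_mkcond /= big_allpairs_dep /=; apply: eq_bigr => c _.
rewrite -mulr_natr [in RHS]big_mkcond mulr_sumr mulr_suml; apply: eq_big_seq => s.
rewrite mem_words has_content_cons /= => /eqP ->.
by case: (0 < gam c)%N; case: has_content; rewrite /= ?mulr0 ?mul0r ?mulr1 ?exprD.
Qed.

Definition diag_energy (gam : T -> nat) := (\sum_(c : T) H c c * 'C(gam c, 2))%N.

Lemma decr_at_id (gam : T -> nat) (c : T) : decr_at gam c c = (gam c).-1.
Proof. by rewrite /decr_at eqxx. Qed.

Lemma decr_at_neq (gam : T -> nat) (c d : T) : d != c -> decr_at gam c d = gam d.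
Proof. by rewrite /decr_at => /negPf ->. Qed.

Lemma sum_decr_at (gam : T -> nat) (c : T) : (0 < gam c)%N ->
  (\sum_(d : T) gam d = (\sum_(d : T) decr_at gam c d).+1)%N.
Proof.
move=> h0; rewrite (bigD1 c) //= [in RHS](bigD1 c) //= decr_at_id -addSn prednK //.
by under [in RHS]eq_bigr => d hd do rewrite decr_at_neq //.
Qed.

Lemma prod_qpoch_decr_at (gam : T -> nat) (c : T) : (0 < gam c)%N ->
  \prod_(d : T) qpoch_at (gam d) = (1 - x ^+ gam c) * \prod_(d : T) qpoch_at (decr_at gam c d).
Proof.
move=> h0; rewrite (bigD1 c) //= [in RHS](bigD1 c) //= decr_at_id.
rewrite -{1 2}(prednK h0) qpoch_atS.
under [in RHS]eq_bigr => d hd do rewrite decr_at_neq //.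
by rewrite mulrCA mulrA.
Qed.

Lemma diag_energy_decr_at (gam : T -> nat) (c : T) : (0 < gam c)%N ->
  (diag_energy (decr_at gam c) + \sum_(d : T) H c d * decr_at gam c d =
   diag_energy gam + \sum_(d : T | (d < c)%N) gam d)%N.
Proof.
move=> h0; have gcE : gam c = ((gam c).-1).+1 by rewrite prednK.
have diagE : diag_energy gam = (diag_energy (decr_at gam c) + H c c * (gam c).-1)%N.
  rewrite /diag_energy (bigD1 c) //= [in RHS](bigD1 c) //= decr_at_id.
  under [in RHS]eq_bigr => d hd do rewrite decr_at_neq //.
  rewrite {1}gcE binS bin1 mulnDr; lia.
have sumE : (\sum_(d : T) H c d * gam d = \sum_(d : T) H c d * decr_at gam c d + H c c)%N.
  rewrite (bigD1 c) //= [in RHS](bigD1 c) //= decr_at_id.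
  under [in RHS]eq_bigr => d hd do rewrite decr_at_neq //.
  rewrite {1}gcE mulnS; lia.
have splitE : (\sum_(d : T) H c d * gam d = \sum_(d : T | (d < c)%N) gam d + H c c * gam c)%N.
  rewrite (bigID (fun d : T => (d < c)%N)) /=; congr (_ + _)%N.
    by apply: eq_bigr => d hd; rewrite H_boundE /H_bound; case: eqP; lia.
  rewrite (bigD1 c) ?ltnn //= big1 ?addn0 // => d /andP[hd hdc].
  suff cd : (c < d)%N by rewrite /H cd mul0n.
  by rewrite ltn_neqAle leqNgt hd andbT eq_sym.
have lastE : (H c c * gam c = H c c * (gam c).-1 + H c c)%N by rewrite {1}gcE mulnS addnC.
move: diagE sumE splitE lastE.
set A := (H c c * gam c)%N; set B := (H c c * (gam c).-1)%N; lia.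
Qed.

Lemma word_sum_closed k (b : T) (gam : T -> nat) : (\sum_(c : T) gam c)%N = k ->
  word_sum k b gam * \prod_(c : T) qpoch_at (gam c) =
  x ^+ (diag_energy gam + \sum_(c : T) H b c * gam c) * qpoch_at k.
Proof.
elim: k b gam => [|k IH] b gam hsum.
  have g0 c : gam c = 0%N.
    by apply/eqP; rewrite -leqn0 -hsum (bigD1 c) //= leq_addr.
  rewrite /word_sum /= big_cons big_nil ifT; last by apply/forallP => d; rewrite g0.
  rewrite /diag_energy /qpoch_at /= addr0 big_geq // mulr1 expr0 mul1r.
  rewrite big1 => [|c _]; last by rewrite g0 big_geq.
  by rewrite !big1 // => c _; rewrite g0 ?bin0n muln0.
rewrite word_sumS qpoch_atS exprD.
have -> : x ^+ diag_energy gam * x ^+ (\sum_(c : T) H b c * gam c) * (qpoch_at k * (1 - x ^+ k.+1))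
    = x ^+ diag_energy gam * qpoch_at k * (x ^+ (\sum_(c : T) H b c * gam c) * (1 - x ^+ k.+1)).
  by ring.
rewrite -(energy_telescope b hsum) mulr_suml mulr_sumr; apply: eq_bigr => c _.
have [->|h0] := posnP (gam c); first by rewrite mulr0n subrr !mulr0 mul0r.
rewrite mulr1n (prod_qpoch_decr_at h0) mulrCA -!mulrA IH; last first.
  by move: hsum; rewrite (sum_decr_at h0) => -[].
rewrite diag_energy_decr_at // (sum_ltE _ (ltnW (ltn_ord c))) !exprD; ring.
Qed.

End WordGeneratingFunction.

Section Weights.
Variable n : nat.
Local Notation T := (Bn n).
Local Notation N := n.*2.+1.

(* [weight_coord u i] is the coefficient of [Lambda_i] in the weight
   [sum_k u_k wt(k)] over the unbarred letters [k]. *)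
Definition weight_coord (u : nat -> int) (i : nat) : int :=
  ((0 < i)%N)%:Z * (1 + (i == n)%:Z) * u i - ((i < n)%N)%:Z * u i.+1.

(* [f k - f kbar] in the position encoding of [Bn n]. *)
Definition bar_diff (f : T -> nat) (k : nat) : int :=
  (f (inord k.-1))%:Z - (f (inord (N - k)%N))%:Z.

Lemma wtE (c : T) (i : nat) : (i <= n)%N ->
  wt c i = ((0 < i)%N)%:Z * (1 + (i == n)%:Z)
             * ((c == i.-1 :> nat)%:Z - (c == (N - i)%N :> nat)%:Z)
         + ((i < n)%N)%:Z * ((c == (n.*2 - i)%N :> nat)%:Z - (c == i :> nat)%:Z).
Proof.
move=> hi; have cN := ltn_ord c.
rewrite /wt /wt_unbar /Lam; case: (ltngtP c n) => h.
- have -> : (c == (N - i)%N :> nat) = false by apply/eqP; lia.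
  have -> : (c == (n.*2 - i)%N :> nat) = false by apply/eqP; lia.
  do ? (case: eqP => ?); do ? (case: ltnP => ?); simpl; lia.
- have -> : (c == i.-1 :> nat) = false by apply/eqP; lia.
  have -> : (c == i :> nat) = false by apply/eqP; lia.
  do ? (case: eqP => ?); do ? (case: ltnP => ?); simpl; lia.
- rewrite h; do ? (case: eqP => ?); do ? (case: ltnP => ?); simpl; lia.
Qed.

Lemma sum_indicator (f : T -> int) (a : nat) :
  \sum_(c : T) f c * (c == a :> nat)%:Z = if (a < N)%N then f (inord a) else 0.
Proof.
case: ifP => ha.
  rewrite (bigD1 (inord a)) //= inordK // eqxx mulr1 big1 ?addr0 // => c hc.
  suff /negPf -> : (c != a :> nat) by rewrite mulr0.
  by apply: contra hc => /eqP ca; apply/eqP/val_inj; rewrite /= inordK.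
rewrite big1 // => c _; suff /negPf -> : (c != a :> nat) by rewrite mulr0.
by apply/eqP => ca; have := ltn_ord c; rewrite ca ha.
Qed.

Lemma sum_weight (f : T -> nat) (i : nat) : (i <= n)%N ->
  \sum_(c : T) (f c)%:Z * wt c i = weight_coord (bar_diff f) i.
Proof.
move=> hi; pose a : int := ((0 < i)%N)%:Z * (1 + (i == n)%:Z); pose e : int := ((i < n)%N)%:Z.
rewrite (eq_bigr (fun c : T => a * ((f c)%:Z * (c == i.-1 :> nat)%:Z)
    - a * ((f c)%:Z * (c == (N - i)%N :> nat)%:Z)
    + e * ((f c)%:Z * (c == (n.*2 - i)%N :> nat)%:Z) - e * ((f c)%:Z * (c == i :> nat)%:Z)));
  last by move=> c _; rewrite wtE //; ring.
rewrite !big_split /= !sumrN -!mulr_sumr !sum_indicator.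
have -> : (i.-1 < N)%N by lia.
have -> : (n.*2 - i < N)%N by lia.
have -> : (i < N)%N by lia.
rewrite /weight_coord /bar_diff /= (_ : (N - i.+1 = n.*2 - i)%N); last lia.
rewrite /a /e; have [-> | ip] := posnP i; first by rewrite !mul0r; ring.
have -> : (N - i < N)%N by lia.
ring.
Qed.

Hypothesis n_gt0 : (0 < n)%N.

Lemma mu_ofE (m : nat -> int) (i : nat) : (i <= n)%N -> mu_of n m i = weight_coord m i.
Proof.
move=> hi; rewrite /mu_of /weight_coord.
have [-> | ip] := posnP i; first by rewrite /= (_ : (0 < n)%N) ?mul0r ?mul1r ?add0r //; lia.
have [ilt | ige] := ltnP i n.
  by rewrite (_ : (i == n) = false) /=; [ring | lia].
have -> : i = n by lia.
by rewrite eqxx /=; ring.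
Qed.

(* The system [weight_coord u i = mu_i] is triangular: solve it from [i = n] down. *)
Lemma weight_coord_inj (d m : nat -> int) :
  (forall i, (i <= n)%N -> weight_coord d i = weight_coord m i) ->
  forall k, (0 < k <= n)%N -> d k = m k.
Proof.
move=> eq_dm; suff down r : (r < n)%N -> d (n - r)%N = m (n - r)%N.
  by move=> k /andP[k0 kn]; have := down (n - k)%N; rewrite subKn //; apply; lia.
elim: r => [_ | r IH rn].
  have := eq_dm n (leqnn n); rewrite /weight_coord subn0 ltnn eqxx.
  rewrite (_ : (0 < n)%N) /=; [lia | lia].
have := eq_dm (n - r.+1)%N (leq_subr _ _); rewrite /weight_coord.
have -> : (0 < n - r.+1)%N by lia.
have -> : (n - r.+1 < n)%N by lia.
have -> : (n - r.+1 == n)%N = false by apply/eqP; lia.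
rewrite (_ : (n - r.+1).+1 = (n - r)%N) ?IH /=; lia.
Qed.

Lemma sum_weight_eq_mu (f : T -> nat) (m : nat -> int) :
  [forall i : 'I_n.+1, \sum_(c : T) (f c)%:Z * wt c i == mu_of n m i] =
  [forall k : 'I_n, bar_diff f k.+1 == m k.+1].
Proof.
apply/forallP/forallP => [eq_fm k | eq_fm i].
  apply/eqP/weight_coord_inj => [i hi|]; last by have := ltn_ord k; lia.
  by rewrite -sum_weight // -mu_ofE // -(inordK (hi : (i < n.+1)%N)); apply/eqP.
have eq_lt k : (k < n)%N -> bar_diff f k.+1 = m k.+1.
  by move=> kn; apply/eqP/(eq_fm (Ordinal kn)).
have hi : (i <= n)%N by rewrite -ltnS.
rewrite sum_weight // mu_ofE // /weight_coord; apply/eqP.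
have -> : ((0 < i)%N)%:Z * (1 + (i == n :> nat)%:Z) * bar_diff f i =
          ((0 < i)%N)%:Z * (1 + (i == n :> nat)%:Z) * m i.
  have [-> | ip] := posnP i; first by rewrite !mul0r.
  by have := eq_lt i.-1; rewrite prednK // => -> //; lia.
by case: (ltnP i n) => [ilt | _]; [rewrite eq_lt | rewrite !mul0r].
Qed.

End Weights.

Section Sequences.
Variable n : nat.
Local Notation T := (Bn n).

Lemma bseq_nth j (b : T) (t : {ffun 'I_j -> T}) k : Defs.bseq b t k = nth b (codom t) k.
Proof.
rewrite /Defs.bseq; case: ltnP => h.
  by rewrite insubT /= codom_ffun (nth_fgraph_ord b (Ordinal h)).
by rewrite nth_default // size_codom card_ord.
Qed.

Lemma nth_rcons_le (b c : T) s i : (i <= size s)%N -> nth b (rcons s c) i = nth c s i.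
Proof.
rewrite nth_rcons; case: ltngtP => // [lt _ | -> _]; first exact: set_nth_default.
by rewrite nth_default.
Qed.

Lemma word_energy_rev (b : T) s : word_energy b (rev s) =
  (\sum_(1 <= i < (size s).+1) i * H (nth b s i) (nth b s i.-1))%N.
Proof.
elim/last_ind: s b => [|s c IH] b; first by rewrite /= big_geq.
rewrite rev_rcons /= size_rev IH size_rcons [in RHS]big_nat_recr //=.
rewrite [nth b (rcons s c) (size s).+1]nth_default ?size_rcons // nth_rcons ltnn eqxx.
rewrite addnC; congr (_ + _)%N; apply: eq_big_nat => i /andP[i0 iS].
by rewrite !nth_rcons_le //; lia.
Qed.

Lemma energy_word j (b : T) (t : {ffun 'I_j -> T}) :
  energy b t = word_energy b (rev (codom t)).
Proof.
rewrite word_energy_rev size_codom card_ord /energy; apply: eq_bigr => i _.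
by rewrite !bseq_nth.
Qed.

Lemma codom_nth k (u : seq T) x0 : size u = k -> codom [ffun i : 'I_k => nth x0 u i] = u.
Proof.
move=> hu; rewrite codomE.
transitivity (map (nth x0 u) (map val (enum 'I_k))).
  by rewrite -map_comp; apply: eq_map => i; rewrite ffunE.
by rewrite val_enum_ord -hu -/(mkseq _ _) mkseq_nth.
Qed.

Lemma sum_ffun_words (V : nmodType) k (F : seq T -> V) :
  \sum_(t : {ffun 'I_k -> T}) F (rev (codom t)) = \sum_(s <- words n k) F s.
Proof.
rewrite -(big_map (fun t : {ffun 'I_k -> T} => rev (codom t)) xpredT).
apply: perm_big; apply: uniq_perm; last 1 first.
- move=> s; rewrite mem_words; apply/mapP/idP.
    by case=> t _ ->; rewrite size_rev size_codom card_ord.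
  move=> /eqP hs; exists [ffun i : 'I_k => nth ord0 (rev s) i].
    by rewrite mem_index_enum.
  by rewrite codom_nth ?revK // size_rev.
- rewrite map_inj_uniq ?index_enum_uniq // => t1 t2 /(can_inj revK) e.
  apply/ffunP => i; have := congr1 (fun s => nth (t1 i) s i) e.
  by rewrite !codom_ffun !nth_fgraph_ord.
- exact: uniq_words.
Qed.

Lemma sum_count_mem_mul (F : T -> int) (s : seq T) :
  \sum_(y <- s) F y = \sum_(c : T) (count_mem c s)%:Z * F c.
Proof.
elim: s => [|y s IH]; first by rewrite big_nil big1 // => c _; rewrite mul0r.
rewrite big_cons IH [RHS](eq_bigr (fun c => (y == c)%:Z * F c + (count_mem c s)%:Z * F c));
  last by move=> c _; rewrite /= PoszD mulrDl.
rewrite big_split /=; congr (_ + _).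
rewrite (bigD1 y) //= eqxx mul1r big1 ?addr0 // => c /negPf.
by rewrite eq_sym => ->; rewrite mul0r.
Qed.

Lemma sum_count_mem (s : seq T) : (\sum_(c : T) count_mem c s)%N = size s.
Proof.
elim: s => [|y s IH]; first by rewrite big1.
rewrite /= big_split /= IH (bigD1 y) //= eqxx big1 ?addn0 ?add1n // => c /negPf.
by rewrite eq_sym => ->.
Qed.

End Sequences.

Section Content.
Variables (n j : nat).
Local Notation T := (Bn n).

Definition content (t : {ffun 'I_j -> T}) : {ffun T -> 'I_j.+1} :=
  [ffun c => inord (count_mem c (codom t))].

Lemma contentE (t : {ffun 'I_j -> T}) c : (content t c : nat) = count_mem c (codom t).
Proof.
rewrite ffunE inordK // ltnS; apply: leq_trans (count_size _ _) _.
by rewrite size_codom card_ord.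
Qed.

Lemma eq_contentE (t : {ffun 'I_j -> T}) (gam : {ffun T -> 'I_j.+1}) :
  (content t == gam) = has_content (fun c => gam c) (rev (codom t)).
Proof.
apply/eqP/forallP => [<- d | h]; first by rewrite count_rev contentE.
apply/ffunP => d; apply: val_inj; rewrite /= contentE -count_rev; exact/eqP/h.
Qed.

Lemma sum_content (t : {ffun 'I_j -> T}) : (\sum_(c : T) content t c)%N = j.
Proof.
under eq_bigr => c _ do rewrite contentE.
by rewrite sum_count_mem size_codom card_ord.
Qed.

Lemma weight_content (t : {ffun 'I_j -> T}) (m : nat -> int) : (0 < n)%N ->
  [forall i : 'I_n.+1, (\sum_(k < j) wt (t k) i) == mu_of n m i] =
  [forall k : 'I_n, bar_diff (fun c => content t c) k.+1 == m k.+1].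
Proof.
move=> n0; rewrite -sum_weight_eq_mu //; apply: eq_forallb => i.
rewrite (eq_bigr (fun c => (count_mem c (codom t))%:Z * wt c i)) => [|c _]; last by rewrite contentE.
by rewrite -sum_count_mem_mul codomE big_map big_enum.
Qed.

End Content.

Lemma one_sub_qX_neq0 i : (0 < i)%N -> 1 - q ^+ i != 0.
Proof.
move=> i0; rewrite /q -tofracXn -tofrac1 -tofracB tofrac_eq0; apply/eqP.
move/(congr1 (fun p : {poly int} => p`_0)); rewrite coefB coef1 coefXn coef0.
have -> : (0 == i)%N = false by rewrite eq_sym eqn0Ngt i0.
by rewrite subr0 => /eqP; rewrite oner_eq0.
Qed.

Lemma qpoch_neq0 m : qpoch m != 0.
Proof.
rewrite /qpoch prodf_seq_neq0; apply/allP => i; rewrite mem_index_iota => /andP[i0 _].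
exact: one_sub_qX_neq0.
Qed.

Lemma bin2_double k : ('C(k, 2) * 2 = k * k.-1)%N.
Proof. by elim: k => // k IH; rewrite binS bin1 mulnDl IH; case: k {IH} => //= k; nia. Qed.

Lemma diag_energyE n (gam : Bn n -> nat) :
  diag_energy gam = ((\sum_(c : Bn n | c != pos_zero n :> nat) gam c * (gam c).-1) %/ 2)%N.
Proof.
rewrite /diag_energy [in RHS](eq_bigr (fun c : Bn n => 2 * (H c c * 'C(gam c, 2)))%N); last first.
  move=> c; rewrite /pos_zero => hc; rewrite /H ltnn andbb (negPf hc) mul1n.
  by rewrite [RHS]mulnC bin2_double.
rewrite -big_distrr /= mulKn // [RHS]big_mkcond /=; apply: eq_bigr => c _.
by rewrite /H ltnn andbb /pos_zero; case: eqP.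
Qed.

Lemma sum_energy_content n j (b : Bn n) (gam : Bn n -> nat) :
  (\sum_(c : Bn n) gam c)%N = j ->
  \sum_(t : {ffun 'I_j -> Bn n} | has_content gam (rev (codom t))) q ^+ energy b t =
  q ^+ ((\sum_(c : Bn n | c != pos_zero n :> nat) gam c * (gam c).-1) %/ 2
        + \sum_(c : Bn n) H b c * gam c) * qmultinom j gam.
Proof.
move=> hs; have prod_neq0 : \prod_(c : Bn n) qpoch (gam c) != 0.
  by apply/prodf_neq0 => c _; exact: qpoch_neq0.
rewrite /qmultinom hs eqxx -diag_energyE mulrA -(word_sum_closed q b hs) mulfK //.
rewrite /word_sum big_mkcond [RHS]big_mkcond -sum_ffun_words /=.
by apply: eq_bigr => t _; rewrite energy_word.
Qed.

Definition admissible n j (m : nat -> int) (gam : {ffun Bn n -> 'I_j.+1}) : bool :=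
  [forall k : 'I_n, bar_diff (fun c => gam c : nat) k.+1 == m k.+1]
  && (\sum_(c : Bn n) gam c == j)%N.

Theorem mainTheorem16 (n j : nat) (b : Bn n) (m : nat -> int) :
  (2 <= n)%N ->
  g j b (mu_of n m) =
  \sum_(gam : {ffun Bn n -> 'I_j.+1} |
          [forall k : 'I_n,
             ((gam (inord (pos_unbar n k.+1)))%:Z
              - (gam (inord (pos_bar n k.+1)))%:Z == m k.+1)]
          && (\sum_(c : Bn n) gam c == j)%N)
     q ^+ ((\sum_(c : Bn n | c != pos_zero n :> nat) gam c * (gam c).-1) %/ 2
           + \sum_(c : Bn n) H b c * gam c)%N
     * qmultinom j (fun c => nat_of_ord (gam c)).
Proof.
move=> n2; have n0 : (0 < n)%N by apply: ltnW.
rewrite [RHS](eq_bigl (@admissible n j m)); last by [].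
rewrite /g (partition_big (@content n j) (@admissible n j m)).
  apply: eq_bigr => gam /andP[hw /eqP hs]; rewrite -sum_energy_content //.
  apply: eq_bigl => t; rewrite -eq_contentE; case: eqP => [e | _]; rewrite ?andbF ?andbT //.
  by rewrite weight_content // e.
by move=> t; rewrite weight_content // /admissible sum_content eqxx andbT.
Qed.
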